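(* Let $\mathbb{F}\subseteq\mathbb{C}$ be a subfield closed under complex conjugation, $m\ge2$, $N\ge1$, and let $\zeta_1,\dots,\zeta_{m-1}\in\mathcal{P}_N^-[\mathbb{F}]$. Let $\mathbf{v}_j(z)=(v_{1j}(z),\dots,v_{m-1,j}(z),\widetilde{v_{mj}}(z))^T$, $j=1,\dots,m$, with all $v_{ij}\in\mathcal{P}_N^+[\mathbb{F}]$, be any $m$ solutions of the system $(\mathcal{S})$, and let $V(z)=(\mathbf{v}_1(z),\dots,\mathbf{v}_m(z))$ be the $m\times m$ matrix with these columns. Then $\det V(z)$ is constant on $\mathbb{C}\setminus\{0\}$.
   Context: For a Laurent polynomial $p(z)=\sum_k c_kz^k$ write $\widetilde{p}(z)=\sum_k\overline{c_k}z^{-k}$. $\mathcal{P}_N^+[\mathbb{F}]=\{\sum_{k=0}^Nc_kz^k: c_k\in\mathbb{F}\}$, $\mathcal{P}_N^-[\mathbb{F}]=\{\sum_{k=1}^Nc_kz^{-k}: c_k\in\mathbb{F}\}$. Let $\mathcal{P}^+$ denote the set of polynomials in $z$ (Laurent polynomials with no negative powers). The system $(\mathcal{S})$ in unknowns $x_1,\dots,x_m$ is $$\zeta_i(z)x_m(z)-\widetilde{x_i}(z)\in\mathcal{P}^+\ (i=1,\dots,m-1),\qquad \sum_{i=1}^{m-1}\zeta_i(z)x_i(z)+\widetilde{x_m}(z)\in\mathcal{P}^+.$$ A vector $(u_1,\dots,u_{m-1},\widetilde{u_m})^T$ with $u_i\in\mathcal{P}_N^+[\mathbb{F}]$ is called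 a solution of $(\mathcal{S})$ if all these conditions hold with $x_i=u_i$, $i=1,\dots,m$. *)

From HB Require Import structures.
From mathcomp Require Import all_boot all_order all_algebra.
From mathcomp Require Import complex.
From mathcomp Require Import reals.
Set Implicit Arguments. Unset Strict Implicit. Unset Printing Implicit Defensive.
Import Order.TTheory GRing.Theory Num.Theory.
Local Open Scope ring_scope.

(* Laurent polynomials over C = R[i] (R : realType), represented as a pair
   (a, p) denoting the Laurent polynomial z^{-a} * p(z). *)
Record laurent (C : numClosedFieldType) := Laurent { lshift : nat; lpoly : {poly C} }.

Section Laurent.
Variable C : numClosedFieldType.

(* value of a Laurent polynomial at z (meaningful for z != 0) *)
Definition leval (L : laurent C) (z : C) : C := (lpoly L).[z] / z ^+ lshift L.

(* L belongs to P^+ : no negative powers of z *)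
Definition in_Pplus (L : laurent C) : Prop :=
  forall k : nat, (k < lshift L)%N -> (lpoly L)`_k = 0.

Definition lpol (p : {poly C}) : laurent C := Laurent 0 p.

Definition ladd (L M : laurent C) : laurent C :=
  Laurent (lshift L + lshift M)
    (lpoly L * 'X^(lshift M) + lpoly M * 'X^(lshift L)).

Definition lopp (L : laurent C) : laurent C := Laurent (lshift L) (- lpoly L).

Definition lsub (L M : laurent C) : laurent C := ladd L (lopp M).

Definition lmul (L M : laurent C) : laurent C :=
  Laurent (lshift L + lshift M) (lpoly L * lpoly M).

Definition lzero : laurent C := lpol 0.

(* q(z^{-1}) for a polynomial q: equals z^{-d} * sum_k q_k z^{d-k}, d = deg q *)
Definition lpinv (q : {poly C}) : laurent C :=
  Laurent (size q).-1 (\poly_(k < size q) q`_((size q).-1 - k)).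

Definition pconj (p : {poly C}) : {poly C} := map_poly (fun x => x^*) p.

(* tilde: for L(z) = sum_k c_k z^k, tilde L (z) = sum_k conj(c_k) z^{-k}.
   With L = z^{-a} P(z):  tilde L = z^a * conj(P)(z^{-1}). *)
Definition ltilde (L : laurent C) : laurent C :=
  lmul (lpol 'X^(lshift L)) (lpinv (pconj (lpoly L))).

Definition in_PNplus (F : {pred C}) (N : nat) (p : {poly C}) : Prop :=
  (size p <= N.+1)%N /\ forall k, p`_k \in F.

(* zeta in P_N^-[F] is given as zeta(z) = q(z^{-1}) with q in P_N^+[F], q_0 = 0 *)
Definition in_PNminus_gen (F : {pred C}) (N : nat) (q : {poly C}) : Prop :=
  in_PNplus F N q /\ q`_0 = 0.

End Laurent.

(* The system (S) for m = n.+1 unknowns, zeta_1..zeta_{m-1} given as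
   zeta i = lpinv (q i), and a candidate solution vector
   (u_1, ..., u_{m-1}, tilde u_m) given by u : 'I_m -> {poly C}. *)
Definition is_solution_S (C : numClosedFieldType) (n : nat)
    (q : 'I_n -> {poly C}) (u : 'I_n.+1 -> {poly C}) : Prop :=
  (forall i : 'I_n,
     in_Pplus (lsub (lmul (lpinv (q i)) (lpol (u ord_max)))
                    (ltilde (lpol (u (widen_ord (leqnSn n) i)))))) /\
  in_Pplus (ladd (\big[@ladd C/lzero C]_(i < n)
                    lmul (lpinv (q i)) (lpol (u (widen_ord (leqnSn n) i))))
                 (ltilde (lpol (u ord_max)))).

Definition sol_vec_eval (C : numClosedFieldType) (n : nat)
    (u : 'I_n.+1 -> {poly C}) (z : C) (i : 'I_n.+1) : C :=
  if i == ord_max then leval (ltilde (lpol (u ord_max))) z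
  else leval (lpol (u i)) z.

From Pilot Require Import Defs.
From HB Require Import structures.
From mathcomp Require Import all_boot all_order all_algebra.
From mathcomp Require Import complex.
From mathcomp Require Import reals.
From mathcomp Require Import ring zify.
Set Implicit Arguments. Unset Strict Implicit. Unset Printing Implicit Defensive.
Import Order.TTheory GRing.Theory Num.Theory.
Local Open Scope ring_scope.

(* Adding to the last row a combination of the other rows turns every row of
   V(z) into a polynomial in z for the last one; adding multiples of the last
   row to the others, the conjugate form of the first m-1 equations of (S)
   turns every row into a polynomial in 1/z.  Hence det V(z) = P(z) = Q(1/z)
   for two polynomials P and Q, which forces P to be constant. *)

Section PolyReversal.
Variable K : fieldType.
Implicit Types (p q : {poly K}) (z : K).

Definition rev_poly q : {poly K} := \poly_(k < size q) q`_((size q).-1 - k).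

Lemma horner_rev_poly q z : z != 0 ->
  (rev_poly q).[z] = z ^+ (size q).-1 * q.[z^-1].
Proof.
move=> z0; rewrite horner_poly horner_coef mulr_sumr.
rewrite (reindex_inj (@rev_ord_inj (size q))) /=.
apply: eq_bigr => k _.
have kd : (k <= (size q).-1)%N.
  by rewrite -ltnS prednK ?ltn_ord //; case: (size q) k => [[]|].
have -> : (size q - k.+1)%N = ((size q).-1 - k)%N by lia.
rewrite subKn // -{2}(subnK kd) exprD exprVn mulrCA -mulrA mulfV ?mulr1 //.
exact: expf_neq0.
Qed.

End PolyReversal.

Section PolyIdentities.
Variable K : numFieldType.
Implicit Types (p q : {poly K}) (z : K).

Lemma poly_eq_on_nonzero p q : (forall z, z != 0 -> p.[z] = q.[z]) -> p = q.
Proof.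
move=> epq; apply/eqP; rewrite -subr_eq0; apply/eqP.
pose rs := mkseq (fun i => i.+1%:R : K) (size (p - q)).
apply: (@roots_geq_poly_eq0 _ _ rs); last by rewrite size_mkseq.
- apply/allP => _ /mapP [i _ ->].
  by rewrite /root hornerD hornerN epq ?pnatr_eq0 // subrr.
- by rewrite map_inj_uniq ?iota_uniq // => a b /eqP; rewrite eqr_nat => /eqP [].
Qed.

(* z^e p(z) = rev q (z) with e = deg q compares a polynomial of size
   size p + e with one of size at most e + 1. *)
Lemma size_poly_le1_of_hornerV p q :
  (forall z, z != 0 -> p.[z] = q.[z^-1]) -> (size p <= 1)%N.
Proof.
move=> epq; have [->|p0] := eqVneq p 0; first by rewrite size_poly0.
have erev : p * 'X^((size q).-1) = rev_poly q.
  apply: poly_eq_on_nonzero => z z0.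
  by rewrite hornerM hornerXn horner_rev_poly // epq // mulrC.
have := size_poly (size q) (fun k => q`_((size q).-1 - k)).
rewrite -/(rev_poly q) -erev size_mulXn //; case: (size q) => [|s] /=; lia.
Qed.

End PolyIdentities.

Section UnitriangularRowOperations.
Variable K : comNzRingType.

Lemma det_unitrig_lower n (B : 'M[K]_n) :
  (forall i j : 'I_n, (i <= j)%N -> B i j = 0) -> \det (1%:M + B) = 1.
Proof.
move=> B0; rewrite det_trig.
  by apply: big1 => i _; rewrite !mxE eqxx B0 // addr0.
apply/is_trig_mxP => i j lij.
by rewrite !mxE B0 ?(ltnW lij) // addr0 -(inj_eq val_inj) /= ltn_eqF.
Qed.

Lemma det_unitrig_upper n (B : 'M[K]_n) :
  (forall i j : 'I_n, (j <= i)%N -> B i j = 0) -> \det (1%:M + B) = 1.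
Proof.
move=> B0; rewrite -det_tr linearD /= tr_scalar_mx.
by apply: det_unitrig_lower => i j lij; rewrite mxE B0.
Qed.

Lemma det_add_comb_to_last_row n (A : 'M[K]_n.+1) (c : 'I_n -> K) :
  \det (\matrix_(i, j) (A i j + (i == ord_max)%:R *
          \sum_(k < n) c k * A (widen_ord (leqnSn n) k) j)) = \det A.
Proof.
pose B := \matrix_(i, l) ((i == ord_max)%:R *
   if unlift ord_max l is Some k then c k else 0) : 'M[K]_n.+1.
have -> : \matrix_(i, j) (A i j + (i == ord_max)%:R *
          \sum_(k < n) c k * A (widen_ord (leqnSn n) k) j) = (1%:M + B) *m A.
  apply/matrixP => i j; rewrite mulmxDl mul1mx !mxE; congr (_ + _).
  rewrite big_ord_recr /= !mxE unlift_none mulr0 mul0r addr0 mulr_sumr.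
  apply: eq_bigr => k _; rewrite mxE mulrA.
  have -> : widen_ord (leqnSn n) k = lift ord_max k.
    by apply: val_inj; rewrite [RHS]lift_max.
  by rewrite liftK.
rewrite det_mulmx det_unitrig_lower ?mul1r // => i l lil; rewrite mxE.
have [ei|] := eqVneq i ord_max; last by rewrite mul0r.
suff -> : l = ord_max by rewrite unlift_none mulr0.
by apply/val_inj/eqP; rewrite eqn_leq -ltnS ltn_ord; move: lil; rewrite ei.
Qed.

Lemma det_add_last_row_multiples n (A : 'M[K]_n.+1) (c : 'I_n.+1 -> K) :
  c ord_max = 0 -> \det (\matrix_(i, j) (A i j + c i * A ord_max j)) = \det A.
Proof.
move=> c0; pose B := \matrix_(i, l) (c i * (l == ord_max)%:R) : 'M[K]_n.+1.
have -> : \matrix_(i, j) (A i j + c i * A ord_max j) = (1%:M + B) *m A.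
  apply/matrixP => i j; rewrite mulmxDl mul1mx !mxE; congr (_ + _).
  rewrite (bigD1 ord_max) //= !mxE eqxx mulr1 big1 ?addr0 // => l nl.
  by rewrite mxE (negbTE nl) mulr0 mul0r.
rewrite det_mulmx det_unitrig_upper ?mul1r // => i l lli; rewrite mxE.
have [el|] := eqVneq l ord_max; last by rewrite mulr0.
suff -> : i = ord_max by rewrite c0 mul0r.
by apply/val_inj/eqP; rewrite eqn_leq -ltnS ltn_ord; move: lli; rewrite el.
Qed.

End UnitriangularRowOperations.

Section LaurentEvaluation.
Variable C : numClosedFieldType.
Implicit Types (L M : laurent C) (p q : {poly C}) (z : C).

Definition poly_of_Pplus L : {poly C} := drop_poly (Defs.lshift L) (lpoly L).

Lemma leval_add L M z : z != 0 -> leval (ladd L M) z = leval L z + leval M z.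
Proof.
move=> z0; rewrite /leval /= hornerD !hornerM !hornerXn exprD.
have zL : z ^+ Defs.lshift L != 0 by rewrite expf_neq0.
have zM : z ^+ Defs.lshift M != 0 by rewrite expf_neq0.
by field; apply/andP.
Qed.

Lemma leval_sub L M z : z != 0 -> leval (lsub L M) z = leval L z - leval M z.
Proof. by move=> z0; rewrite leval_add // /leval /= hornerN mulNr. Qed.

Lemma leval_mul L M z : leval (lmul L M) z = leval L z * leval M z.
Proof. by rewrite /leval /= hornerM exprD invfM; ring. Qed.

Lemma leval_lpol p z : leval (lpol p) z = p.[z].
Proof. by rewrite /leval /= expr0 invr1 mulr1. Qed.

Lemma leval_sum n (L : 'I_n -> laurent C) z : z != 0 ->
  leval (\big[@ladd C/lzero C]_(i < n) L i) z = \sum_(i < n) leval (L i) z.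
Proof.
move=> z0; apply: (big_rec2 (fun M w => leval M z = w)).
  by rewrite leval_lpol horner0.
by move=> i M w _ <-; rewrite leval_add.
Qed.

Lemma leval_lpinv q z : z != 0 -> leval (lpinv q) z = q.[z^-1].
Proof.
move=> z0; rewrite /leval /= -/(rev_poly q) horner_rev_poly // mulrC mulKf //.
exact: expf_neq0.
Qed.

Lemma horner_pconj p z : (pconj p).[z] = (p.[z^*])^*.
Proof. by rewrite /pconj -horner_map /= conjCK. Qed.

Lemma leval_ltilde_lpol p z : z != 0 -> leval (ltilde (lpol p)) z = (pconj p).[z^-1].
Proof.
by move=> z0; rewrite leval_mul leval_lpol leval_lpinv //= expr0 hornerC mul1r.
Qed.

Lemma leval_Pplus L z : in_Pplus L -> z != 0 -> leval L z = (poly_of_Pplus L).[z].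
Proof.
move=> PL z0; rewrite /leval.
have take0 : take_poly (Defs.lshift L) (lpoly L) = 0.
  by apply/polyP => k; rewrite coef_take_poly coef0; case: ifP => // /PL.
rewrite -{1}(poly_take_drop (Defs.lshift L) (lpoly L)) take0 add0r.
by rewrite hornerM hornerXn mulfK // expf_neq0.
Qed.

End LaurentEvaluation.

Section SolutionsOfS.
Variables (C : numClosedFieldType) (n : nat) (q : 'I_n -> {poly C}).
Implicit Types (u : 'I_n.+1 -> {poly C}) (z : C).
Local Notation widen k := (widen_ord (leqnSn n) k).

Definition last_eq_poly u : {poly C} :=
  poly_of_Pplus (ladd (\big[@ladd C/lzero C]_(k < n)
      lmul (lpinv (q k)) (lpol (u (widen k)))) (ltilde (lpol (u ord_max)))).

Definition row_eq_poly u (k : 'I_n) : {poly C} :=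
  poly_of_Pplus (lsub (lmul (lpinv (q k)) (lpol (u ord_max)))
                      (ltilde (lpol (u (widen k))))).

Lemma solution_last_eq u z : is_solution_S q u -> z != 0 ->
  \sum_(k < n) (q k).[z^-1] * (u (widen k)).[z] + (pconj (u ord_max)).[z^-1]
  = (last_eq_poly u).[z].
Proof.
move=> [_ Slast] z0; rewrite -leval_Pplus // leval_add // leval_sum //.
rewrite leval_ltilde_lpol //; congr (_ + _); apply: eq_bigr => k _.
by rewrite leval_mul leval_lpinv // leval_lpol.
Qed.

(* Equation k of (S), evaluated at 1/conj(z) and conjugated. *)
Lemma solution_row_eq u k z : is_solution_S q u -> z != 0 ->
  (u (widen k)).[z] - (pconj (q k)).[z] * (pconj (u ord_max)).[z^-1]
  = - (pconj (row_eq_poly u k)).[z^-1].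
Proof.
move=> [Srow _] z0; set w := (z^*)^-1.
have w0 : w != 0 by rewrite invr_eq0 conjC_eq0.
have wV : w^-1 = z^* by rewrite invrK.
have zVC : (z^-1)^* = w by rewrite fmorphV.
have := leval_Pplus (Srow k) w0.
rewrite leval_sub // leval_mul leval_lpinv // leval_lpol leval_ltilde_lpol // wV.
move=> /(congr1 (fun x => x^*)); rewrite rmorphB rmorphM /=.
rewrite !horner_pconj !conjCK zVC -/(row_eq_poly u k) => <-; ring.
Qed.

Lemma det_sol_poly (v : 'I_n.+1 -> 'I_n.+1 -> {poly C}) :
  (forall j, is_solution_S q (v j)) ->
  exists P : {poly C}, forall z, z != 0 ->
    \det (\matrix_(i, j) sol_vec_eval (v j) z i) = P.[z].
Proof.
move=> Sv; pose M := \matrix_(i, j)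
  (if i == ord_max then last_eq_poly (v j) else v j i) : 'M[{poly C}]_n.+1.
exists (\det M) => z z0.
rewrite -(det_add_comb_to_last_row _ (fun k => (q k).[z^-1])).
transitivity (\det (map_mx (horner_eval z) M)); last by rewrite det_map_mx.
congr (\det _); apply/matrixP => i j; rewrite !mxE /sol_vec_eval horner_evalE.
case: (boolP (i == ord_max)) => [/eqP ei|ni]; last first.
  by rewrite mul0r addr0 leval_lpol.
subst i; rewrite mul1r -solution_last_eq // addrC leval_ltilde_lpol //.
congr (_ + _); apply: eq_bigr => k _; rewrite !mxE /sol_vec_eval.
by rewrite ifN ?leval_lpol // -(inj_eq val_inj) /= neq_ltn ltn_ord.
Qed.

Lemma det_sol_polyV (v : 'I_n.+1 -> 'I_n.+1 -> {poly C}) :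
  (forall j, is_solution_S q (v j)) ->
  exists Q : {poly C}, forall z, z != 0 ->
    \det (\matrix_(i, j) sol_vec_eval (v j) z i) = Q.[z^-1].
Proof.
move=> Sv; pose M := \matrix_(i, j)
  (if unlift ord_max i is Some k then - pconj (row_eq_poly (v j) k)
   else pconj (v j ord_max)) : 'M[{poly C}]_n.+1.
exists (\det M) => z z0.
pose c i := if unlift ord_max i is Some k then - (pconj (q k)).[z] else 0.
rewrite -(det_add_last_row_multiples _ (c := c)) ?/c ?unlift_none //.
transitivity (\det (map_mx (horner_eval z^-1) M)); last by rewrite det_map_mx.
congr (\det _); apply/matrixP => i j; rewrite !mxE /sol_vec_eval horner_evalE.
case: unliftP => [k ->|->]; last first.
  by rewrite eqxx mul0r addr0 leval_ltilde_lpol.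
have -> : lift ord_max k = widen k by apply: val_inj; rewrite [LHS]lift_max.
rewrite ifN ?leval_lpol ?leval_ltilde_lpol //; last first.
  by rewrite -(inj_eq val_inj) /= neq_ltn ltn_ord.
by rewrite eqxx hornerN -solution_row_eq // mulNr.
Qed.

End SolutionsOfS.

Theorem lemma4 (R : realType) (F : {pred R[i]})
  (HF : divring_closed F) (HFc : forall x, x \in F -> x^* \in F)
  (n : nat) (hn : (1 <= n)%N) (N : nat) (hN : (1 <= N)%N)
  (q : 'I_n -> {poly R[i]}) (hq : forall i, in_PNminus_gen F N (q i))
  (v : 'I_n.+1 -> 'I_n.+1 -> {poly R[i]})
  (hv : forall j i, in_PNplus F N (v j i))
  (hsol : forall j, is_solution_S q (v j)) :
  exists c : R[i], forall z : R[i], z != 0 ->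
    \det (\matrix_(i, j) sol_vec_eval (v j) z i) = c.
Proof.
have [P detP] := det_sol_poly hsol.
have [Q detQ] := det_sol_polyV hsol.
have sizeP : (size P <= 1)%N.
  by apply: (@size_poly_le1_of_hornerV _ _ Q) => z z0; rewrite -detP // detQ.
exists P`_0 => z z0.
by rewrite detP // (size1_polyC sizeP) hornerC coefC.
Qed.
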